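(* Let $a_2,a_3$ be integers with $1<a_2<a_3$, $A=\{1,a_2,a_3\}$, and write $a_3=C_2a_2+C_1$ with $0\le C_1<a_2$. If $a_2-C_2\le C_1<a_2$, or if $C_1=0$, then the fundamental stride generator for $A$ is of order $0$.
   Context: For integers $n$ and $i\ge 0$, an integer $x$ has an $n$-generation of order $i$ if there are integers $c_1,c_2\ge 0$ with $x+ia_3=c_2a_2+c_1$ and $c_1+c_2\le n+i$. For integers $n$ and $p\ge0$, $SG(A,n,p)$ is a stride generator (of order $p$) if: (A) every integer $0\le x<a_3$ has an $n$-generation of some order $\le p$; (B) at least one integer $0\le x<a_3$ has no $n$-generation of order $<p$; (C) at least one integer $0\le y<a_3$ has no $(n-1)$-generation of any order $\le p+1$. A stride generator $SG(A,n,p)$ is the fundamental stride generator for $A$ if there is no stride generator $SG(A,n',p')$ with $n'>n$. *)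

From Stdlib Require Import ZArith Lia.
Open Scope Z_scope.

(* A = {1, a2, a3}; only a2 and a3 matter. *)

Definition has_generation (a2 a3 n x i : Z) : Prop :=
  exists c1 c2 : Z, 0 <= c1 /\ 0 <= c2 /\
    x + i * a3 = c2 * a2 + c1 /\ c1 + c2 <= n + i.

Definition stride_generator (a2 a3 n p : Z) : Prop :=
  0 <= p /\
  (* (A) *)
  (forall x, 0 <= x < a3 -> exists i, 0 <= i <= p /\ has_generation a2 a3 n x i) /\
  (* (B) *)
  (exists x, 0 <= x < a3 /\ forall i, 0 <= i < p -> ~ has_generation a2 a3 n x i) /\
  (* (C) *)
  (exists y, 0 <= y < a3 /\ forall i, 0 <= i <= p + 1 -> ~ has_generation a2 a3 (n - 1) y i).

Definition fundamental_stride_generator (a2 a3 n p : Z) : Prop :=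
  stride_generator a2 a3 n p /\
  ~ (exists n' p', n' > n /\ stride_generator a2 a3 n' p').

From Stdlib Require Import ZArith Lia.
Open Scope Z_scope.

(* With M = C2 + a2 - 2, greedy division by a2 gives every 0 <= x < a3 an
   M-generation of order 0, while y = C2 a2 - 1 has no (M-1)-generation of
   order 0 or 1: greedy representations minimise c1 + c2, and the hypothesis
   on C1 makes the greedy cost of y + a3 exceed M.  Hence SG(A, M, 0) is a
   stride generator, and any stride generator with n >= M already satisfies
   (A) with order 0, so (B) forces its order to be 0. *)

Lemma has_generation_mono a2 a3 n m x i :
  n <= m -> has_generation a2 a3 n x i -> has_generation a2 a3 m x i.
Proof. intros Hnm [c1 [c2 H]]. exists c1, c2. lia. Qed.

Lemma greedy_cost_minimal a2 q r c1 c2 :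
  0 < a2 -> 0 <= r < a2 -> 0 <= c1 -> 0 <= c2 ->
  c2 * a2 + c1 = q * a2 + r -> q + r <= c1 + c2.
Proof.
  intros Ha2 Hr Hc1 Hc2 E.
  assert (Hq : c2 <= q).
  { destruct (Z_le_gt_dec c2 q) as [|Hgt]; [assumption|].
    assert (c2 * a2 >= (q + 1) * a2) by nia. nia. }
  nia.
Qed.

Section FundamentalOrderZero.

Variables a2 a3 M : Z.
Hypothesis a3_pos : 0 < a3.
Hypothesis generation0 :
  forall x, 0 <= x < a3 -> has_generation a2 a3 M x 0.
Hypothesis no_generation01 :
  exists y, 0 <= y < a3 /\
    forall i, 0 <= i <= 1 -> ~ has_generation a2 a3 (M - 1) y i.

Lemma stride_generator_order0 : stride_generator a2 a3 M 0.
Proof.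
  split; [lia|]. split; [|split].
  - intros x Hx. exists 0. split; [lia|]. now apply generation0.
  - exists 0. split; [lia|]. intros i Hi. lia.
  - exact no_generation01.
Qed.

Lemma stride_generator_bounded n p :
  stride_generator a2 a3 n p -> n <= M.
Proof.
  intros (Hp & _ & _ & y & Hy & Hno).
  destruct (Z_le_gt_dec n M) as [|Hgt]; [assumption|].
  exfalso. apply (Hno 0); [lia|].
  apply (has_generation_mono _ _ M); [lia|]. now apply generation0.
Qed.

Lemma fundamental_stride_generator_order0 :
  fundamental_stride_generator a2 a3 M 0.
Proof.
  split; [exact stride_generator_order0|].
  intros (n' & p' & Hn' & Hsg).
  pose proof (stride_generator_bounded n' p' Hsg). lia.
Qed.

Lemma fundamental_stride_generator_order_eq0 n p :
  fundamental_stride_generator a2 a3 n p -> p = 0.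
Proof.
  intros [(Hp & _ & (x & Hx & HB) & _) Hmax].
  assert (HMn : M <= n).
  { destruct (Z_le_gt_dec M n) as [|Hgt]; [assumption|].
    exfalso. apply Hmax. exists M, 0. split; [lia|].
    exact stride_generator_order0. }
  destruct (Z.eq_dec p 0) as [|Hp0]; [assumption|].
  exfalso. apply (HB 0); [lia|].
  apply (has_generation_mono _ _ M); [assumption|]. now apply generation0.
Qed.

End FundamentalOrderZero.

Section TwoGenerators.

Variables a2 a3 C1 C2 : Z.
Hypothesis a2_gt1 : 1 < a2.
Hypothesis a3_eq : a3 = C2 * a2 + C1.
Hypothesis C1_range : 0 <= C1 < a2.
Hypothesis C2_pos : 1 <= C2.

Lemma greedy_generation0 x :
  0 <= x < a3 -> has_generation a2 a3 (C2 + a2 - 2) x 0.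
Proof.
  intros Hx.
  pose proof (Z.div_mod x a2 ltac:(lia)) as Ediv.
  pose proof (Z.mod_pos_bound x a2 ltac:(lia)) as Hr.
  set (q := x / a2) in *. set (r := x mod a2) in *.
  assert (Hq0 : 0 <= q) by (apply Z.div_pos; lia).
  assert (HqC2 : q <= C2).
  { destruct (Z_le_gt_dec q C2) as [|Hgt]; [assumption|]. nia. }
  exists r, q. repeat split; try lia.
  (* if q = C2 then r < C1 <= a2 - 1 *)
  destruct (Z.eq_dec q C2) as [->|]; nia.
Qed.

Hypothesis C1_cond : a2 - C2 <= C1 < a2 \/ C1 = 0.

Lemma greedy_no_generation01 i :
  0 <= i <= 1 -> ~ has_generation a2 a3 (C2 + a2 - 2 - 1) (C2 * a2 - 1) i.
Proof.
  intros Hi (c1 & c2 & Hc1 & Hc2 & E & Hcost).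
  assert (i = 0 \/ i = 1) as [-> | ->] by lia.
  - pose proof (greedy_cost_minimal a2 (C2 - 1) (a2 - 1) c1 c2). lia.
  - destruct (Z.eq_dec C1 0) as [HC1|HC1].
    + pose proof (greedy_cost_minimal a2 (2 * C2 - 1) (a2 - 1) c1 c2). nia.
    + pose proof (greedy_cost_minimal a2 (2 * C2) (C1 - 1) c1 c2). nia.
Qed.

End TwoGenerators.

Theorem lemma15 (a2 a3 C1 C2 : Z) :
  1 < a2 -> a2 < a3 ->
  a3 = C2 * a2 + C1 -> 0 <= C1 < a2 ->
  (a2 - C2 <= C1 < a2 \/ C1 = 0) ->
  (exists n, fundamental_stride_generator a2 a3 n 0) /\
  (forall n p, fundamental_stride_generator a2 a3 n p -> p = 0).
Proof.
  intros Ha2 Ha3 Ea3 HC1 Hcond.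
  assert (HC2 : 1 <= C2) by nia.
  assert (Hgen : forall x, 0 <= x < a3 ->
            has_generation a2 a3 (C2 + a2 - 2) x 0)
    by (intros; now apply (greedy_generation0 a2 a3 C1 C2)).
  assert (Hnogen : exists y, 0 <= y < a3 /\ forall i, 0 <= i <= 1 ->
            ~ has_generation a2 a3 (C2 + a2 - 2 - 1) y i).
  { exists (C2 * a2 - 1). split; [nia|].
    intros i Hi. now apply (greedy_no_generation01 a2 a3 C1 C2). }
  split.
  - exists (C2 + a2 - 2).
    apply fundamental_stride_generator_order0; [lia | exact Hgen | exact Hnogen].
  - intros n p.
    exact (fundamental_stride_generator_order_eq0 a2 a3 _ ltac:(lia) Hgen Hnogen n p).
Qed.
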